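(* Let $(\Omega,\mathcal{F},P)$ be a probability space with a filtration $(\mathcal{G}_t)_{t\in[0,1]}$, $\mathcal{G}_t\subset\mathcal{F}$, and let $1<\beta<\infty$. Let $\phi:\Omega\to L^\beta=L^\beta([0,1],\mathcal{B}([0,1]),\mathrm{Leb})$ be measurable (for the Borel $\sigma$-field of the weak topology) and such that $\sigma(\phi1_{[0,t]})\subset\mathcal{G}_t$ for all $t\in[0,1]$. Then there exists $\bar\phi:\Omega\times[0,1]\to\mathbb{R}$ with $\bar\phi(\omega,t)=\phi(\omega)(t)$ for $P\otimes\mathrm{Leb}$-almost every $(\omega,t)$, such that $\bar\phi$ is progressively measurable with respect to $(\mathcal{G}_t)_{t\in[0,1]}$. *)

From HB Require Import structures.
From mathcomp Require Import all_boot all_order all_algebra.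
From mathcomp Require Import all_classical all_reals all_analysis.
Set Implicit Arguments. Unset Strict Implicit. Unset Printing Implicit Defensive.
Import Order.TTheory GRing.Theory Num.Theory.
Local Open Scope classical_set_scope.
Local Open Scope ring_scope.

Section Defs.
Context {R : realType}.

(* f (a concrete representative) is an element of L^p([0,1], Borel, Leb) *)
Definition I01 : set R := `[(0:R), 1]%classic.

Definition Lp01 (p : R) (f : R -> R) : Prop :=
  measurable_fun `[(0:R), 1]%classic f /\
  (\int[@lebesgue_measure R]_(x in I01) ((`|f x| `^ p)%:E) < +oo)%E.

Definition pair01 (f g : R -> R) : R :=
  Rintegral (@lebesgue_measure R) `[(0:R), 1]%classic (fun x => f x * g x).

Definition conj_exp (p : R) : R := p / (p - 1).

(* open sets of the weak topology sigma(L^p, L^p') on L^p (dual of L^p is L^p') *)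
Definition weak_open (p : R) (A : set (R -> R)) : Prop :=
  A `<=` Lp01 p /\
  forall f, A f ->
    exists (n : nat) (g : nat -> R -> R) (e : R),
      0 < e /\ (forall i, (i < n)%N -> Lp01 (conj_exp p) (g i)) /\
      forall h, Lp01 p h ->
        (forall i, (i < n)%N -> `|pair01 h (g i) - pair01 f (g i)| < e) -> A h.

Definition weak_borel (p : R) : set (set (R -> R)) := <<s weak_open p >>.

Definition filtration {d} {T : measurableType d} (G : R -> set (set T)) : Prop :=
  (forall t, 0 <= t <= 1 -> sigma_algebra setT (G t) /\ G t `<=` measurable) /\
  (forall s t, 0 <= s -> s <= t -> t <= 1 -> G s `<=` G t).

Definition prog_measurable {d} {T : measurableType d}
    (G : R -> set (set T)) (f : T -> R -> R) : Prop :=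
  forall t, 0 <= t <= 1 -> forall B : set R, measurable B ->
    <<s [set X : set (T * R) | exists (A : set T) (C : set R),
            G t A /\ measurable C /\ C `<=` `[(0:R), t]%classic /\ X = A `*` C] >>
      [set z : T * R | `[(0:R), t]%classic z.2 /\ B (f z.1 z.2)].
End Defs.

From HB Require Import structures.
From mathcomp Require Import all_boot all_order all_algebra.
From mathcomp Require Import all_classical all_reals all_analysis.
From mathcomp Require Import measurable_realfun lebesgue_integral_differentiation.
From mathcomp Require Import lra.
Import Order.TTheory GRing.Theory Num.Theory.
Import numFieldNormedType.Exports.
Local Open Scope classical_set_scope.
Local Open Scope ring_scope.

Set Implicit Arguments. Unset Strict Implicit. Unset Printing Implicit Defensive.

(* The version [phibar] of [phi] is a limsup of averages of [phi w] over the grid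
   cells [[(k-1)/(n+1), k/(n+1)]] with [k = floor (s (n+1))]. These cells lie to
   the left of [s] and shrink nicely to it, so Lebesgue's differentiation theorem
   gives [phibar w = phi w] almost everywhere on [[0,1]], for every [w]. The
   average at a grid point [k/(n+1)] is the pairing of [phi w 1_[0,k/(n+1)]] with
   an indicator, hence is [G_(k/(n+1))]-measurable in [w]; as a function of time it
   is constant on [[k/(n+1), (k+1)/(n+1))], so on [Omega x [0,t]] it is a countable
   union of [G_t]-rectangles, and the limsup inherits progressive measurability. *)

Section Lp01.
Context {R : realType}.
Local Notation mu := (@lebesgue_measure R).
Implicit Types (p q : R) (f g : R -> R) (C : set R).

Lemma measurable_I01 : measurable (I01 : set R).
Proof. exact: measurable_itv. Qed.

Lemma lebesgue_measure_I01 : mu I01 = 1%E.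
Proof. by rewrite /I01 lebesgue_measure_itv/= lte_fin ltr01 oppr0 adde0. Qed.

Lemma Lp01_integrable p f : 1 <= p -> Lp01 p f -> mu.-integrable I01 (EFin \o f).
Proof.
move=> p1 [mf fin]; apply/integrableP; split; first exact/measurable_EFinP.
have mfp : measurable_fun I01 (fun x => `|f x| `^ p).
  by apply: (measurableT_comp (measurable_powR _)); exact: measurableT_comp.
apply: (@le_lt_trans _ _ (\int[mu]_(x in I01) (1 + (`|f x| `^ p)%:E))%E).
  apply: ge0_le_integral => //.
  - exact: measurable_I01.
  - by apply: measurableT_comp => //; apply/measurable_EFinP.
  - by apply: emeasurable_funD => //; exact/measurable_EFinP.
  - move=> x _; rewrite /= -EFinD lee_fin.
    have [x1|x1] := leP `|f x| 1; first by rewrite (le_trans x1)// lerDl powR_ge0.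
    by rewrite (@le_trans _ _ (`|f x| `^ p)) ?lerDr// le1r_powR// ltW.
rewrite ge0_integralD//; [|exact: measurable_itv|exact/measurable_EFinP].
rewrite lte_add_pinfty// integral_cst; last exact: measurable_itv.
by rewrite mul1e /= lebesgue_measure_I01 ltry.
Qed.

Lemma Lp01_integrable_patch p f : 1 <= p -> Lp01 p f ->
  mu.-integrable setT (EFin \o (f \_ I01)).
Proof.
move=> p1 Lf; have mI01 : measurable (I01 : set (measurableTypeR R)).
  exact: measurable_itv.
by rewrite -restrict_EFin; apply/(integrable_mkcond _ mI01); exact: Lp01_integrable p1 Lf.
Qed.

Lemma Lp01_indic q C : 0 < q -> measurable C -> Lp01 q \1_C.
Proof.
move=> q0 mC; split; first exact: measurable_indic.
have indic_powR x : `|\1_C x| `^ q = \1_C x.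
  by rewrite indicE; case: (x \in C); rewrite ?normr1 ?powR1// normr0 powR0// gt_eqF.
under eq_integral do rewrite indic_powR.
rewrite integral_indic//; last exact: measurable_I01.
apply: (@le_lt_trans _ _ (mu I01)); last by rewrite lebesgue_measure_I01 ltry.
apply: le_measure; last exact: subIsetr.
- by rewrite inE; apply: measurableI => //; exact: measurable_I01.
- by rewrite inE; exact: measurable_I01.
Qed.

Lemma Lp01_mul_indic p f C : 0 < p -> measurable C -> Lp01 p f ->
  Lp01 p (fun s => f s * \1_C s).
Proof.
move=> p0 mC [mf fin]; have mfC : measurable_fun I01 (fun s => f s * \1_C s).
  by apply: measurable_funM => //; exact: measurable_indic.
split => //; apply: le_lt_trans fin; apply: ge0_le_integral => //.
- exact: measurable_I01.
- by apply: measurableT_comp => //; apply: (measurableT_comp (measurable_powR _));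
    exact: measurableT_comp.
- by apply: measurableT_comp => //; apply: (measurableT_comp (measurable_powR _));
    exact: measurableT_comp.
move=> x _; rewrite lee_fin indicE; case: (x \in C); first by rewrite mulr1.
by rewrite mulr0 normr0 powR0 ?gt_eqF// powR_ge0.
Qed.

Lemma pair01_integral p f g : 1 <= p -> Lp01 p (fun x => f x * g x) ->
  (pair01 f g)%:E = (\int[mu]_(x in I01) (f x * g x)%:E)%E.
Proof.
move=> p1 Lfg; rewrite /pair01 /Rintegral fineK //.
apply: (integrable_fin_num _ (Lp01_integrable p1 Lfg)); exact: measurable_itv.
Qed.

Lemma integral_itv_I01_indic f a u : 0 <= u <= 1 ->
  (\int[mu]_(y in `[a, u]) ((f \_ I01) y)%:E =
   \int[mu]_(y in I01) ((f y * \1_`[0, u] y) * \1_`[a, u] y)%:E)%E.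
Proof.
move=> /andP[u0 u1]; rewrite integral_mkcond [RHS]integral_mkcond.
apply: eq_integral => y _; rewrite /patch !indicE /I01 !mem_setE !in_itv /=.
by have [ay|ay] := leP a y; have [yu|yu] := leP y u; have [y0|y0] := leP 0 y;
  have [y1|y1] := leP y 1; rewrite /= ?mulr1 ?mulr0 //; exfalso; lra.
Qed.

End Lp01.

Section weak_borel.
Context {R : realType}.
Variable p : R.

Lemma weak_borel_Lp01 : weak_borel p (Lp01 p).
Proof.
apply: sub_sigma_algebra; split => // f _.
by exists 0%N, (fun=> cst 0), 1.
Qed.

Lemma weak_borel_pair01 g Y : Lp01 (conj_exp p) g -> measurable Y ->
  weak_borel p (Lp01 p `&` (fun f => pair01 f g) @^-1` Y).
Proof.
move=> Lg mY.
have : measurable_fun (Lp01 p : set (g_sigma_algebraType (weak_open p)))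
    (fun f => pair01 f g).
  apply: (measurability _ (RGenInftyO.measurableE R)).
  move=> _ [_ [c ->] <-]; apply: sub_sigma_algebra; split; first by move=> f [].
  move=> f [Lf]; rewrite /= in_itv/= => fgc.
  exists 1%N, (fun=> g), (c - pair01 f g); split; first by rewrite subr_gt0.
  split => // h Lh /(_ 0%N isT) hgc; split => //=; rewrite in_itv/=.
  by rewrite -(subrK (pair01 f g) (pair01 h g)) -ltrBrDr (le_lt_trans (ler_norm _)).
by move/(_ weak_borel_Lp01 Y mY).
Qed.

End weak_borel.

Section left_cells.
Context {R : realType}.
Local Notation mu := (@lebesgue_measure R).
Implicit Types (n k : nat) (s x : R) (f : R -> R).

Definition grid_index n x : R := (Num.floor (x * n.+1%:R))%:~R.

Definition left_cell x n : set R :=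
  `[(grid_index n x - 1) / n.+1%:R, grid_index n x / n.+1%:R].

Lemma grid_indexE n k s : k%:R / n.+1%:R <= s < k.+1%:R / n.+1%:R ->
  grid_index n s = k%:R.
Proof.
move=> /andP[ks sk]; rewrite /grid_index (@floor_def _ _ k%:Z)//.
by rewrite -ler_pdivrMr// -ltr_pdivlMr// intrD -pmulrn ks natr1 sk.
Qed.

Lemma grid_index_grid n k : grid_index n (k%:R / n.+1%:R) = k%:R.
Proof. by apply: grid_indexE; rewrite lexx/= ltr_pM2r ?invr_gt0// ltr_nat. Qed.

Lemma grid_cover n s : 0 <= s -> exists k, k%:R / n.+1%:R <= s < k.+1%:R / n.+1%:R.
Proof.
move=> s0; exists (Num.truncn (s * n.+1%:R)).
by rewrite ler_pdivrMr// ltr_pdivlMr// truncn_itv// mulr_ge0.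
Qed.

Lemma lebesgue_measure_left_cell x n : mu (left_cell x n) = (n.+1%:R^-1)%:E.
Proof.
rewrite /left_cell lebesgue_measure_itv/= lte_fin ltr_pM2r ?invr_gt0//.
by rewrite ltrBlDr ltrDl ltr01 -EFinD -mulrBl opprB addrC subrK mul1r.
Qed.

Lemma left_cell_nicely_shrinking x : nicely_shrinking x (left_cell x).
Proof.
split; first by move=> n; exact: measurable_itv.
exists (6, fun n => (3 / n.+1%:R)%:pos); split => /=.
- lra.
- by rewrite -(mulr0 3); apply: cvgM; [exact: cvg_cst|exact: cvg_harmonic].
- move=> n y; rewrite /left_cell /ball /= in_itv /= => /andP[y1 y2].
  have N0 : 0 < n.+1%:R :> R by [].
  have fl_le : grid_index n x <= x * n.+1%:R by exact: floor_le.
  have fl_gt : x * n.+1%:R < grid_index n x + 1.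
    by rewrite /grid_index -[1]/(1%:~R) -intrD floorD1_gt.
  rewrite ler_pdivrMr// in y1; rewrite ler_pdivlMr// in y2.
  rewrite ltr_pdivlMr// -[n.+1%:R in X in X < _](ger0_norm (ltW N0)).
  by rewrite -normrM mulrBl ltr_norml; apply/andP; split; lra.
- move=> n; rewrite lebesgue_measure_ball// lebesgue_measure_left_cell -EFinM.
  by rewrite lee_fin mulr2n -mulrDl -natrD.
Qed.

Definition cell_avg f n s : \bar R :=
  ((mu (left_cell s n))^-1 * \int[mu]_(y in left_cell s n) ((f \_ I01) y)%:E)%E.

Definition limsup_cell_avg f s : R := fine (limn_esup (fun n => cell_avg f n s)).

Lemma limsup_cell_avg_ae p f : 1 <= p -> Lp01 p f ->
  {ae mu, forall s, I01 s -> limsup_cell_avg f s = f s}.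
Proof.
move=> p1 Lf.
have locf : locally_integrable setT (f \_ I01).
  apply: open_integrable_locally; first exact: openT.
  exact: Lp01_integrable_patch p1 Lf.
move: (lebesgue_differentiation locf); apply: filterS.
  exact: (ae_filter_ringOfSetsType mu).
move=> s lebf I01s.
have := nice_lebesgue_differentiation left_cell_nicely_shrinking locf lebf.
move=> /cvg_esups cvg_avg.
rewrite /limsup_cell_avg limn_esup_lim (cvg_lim _ cvg_avg)//.
by rewrite /= patchT// inE.
Qed.

Lemma cell_avg_grid_index f n s s' : grid_index n s = grid_index n s' ->
  cell_avg f n s = cell_avg f n s'.
Proof. by rewrite /cell_avg /left_cell => ->. Qed.

Lemma cell_avg_grid p f n k : 1 <= p -> Lp01 p f ->
  cell_avg f n (k%:R / n.+1%:R) =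
  (n.+1%:R * fine (\int[mu]_(y in `[(k%:R - 1) / n.+1%:R, k%:R / n.+1%:R])
                     ((f \_ I01) y)%:E))%:E.
Proof.
move=> p1 Lf; rewrite /cell_avg lebesgue_measure_left_cell inver invr_eq0 gt_eqF//.
rewrite invrK EFinM /left_cell grid_index_grid fineK//.
apply: integrable_fin_num; first exact: measurable_itv.
apply: integrableS (Lp01_integrable_patch p1 Lf) => //; exact: measurable_itv.
Qed.

End left_cells.

Section progressive.
Context {R : realType} {d} {T : measurableType d}.
Variable G : R -> set (set T).

Definition prog_rectangles (t : R) : set (set (T * R)) :=
  [set X | exists (A : set T) (C : set R),
    G t A /\ measurable C /\ C `<=` `[(0:R), t]%classic /\ X = A `*` C].

Local Notation prog_space t := (g_sigma_algebraType (prog_rectangles t)).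

Definition prog_domain (t : R) : set (T * R) := [set z | `[(0:R), t]%classic z.2].

Lemma measurable_prog_domain t :
  G t setT -> measurable (prog_domain t : set (prog_space t)).
Proof.
move=> GtT; apply: sub_sigma_algebra; exists setT, `[(0:R), t]%classic.
split => //; split; first exact: measurable_itv.
by split => //; apply/seteqP; split => [z|z []].
Qed.

Lemma prog_measurable_from_measurable_fun (f : T -> R -> R) :
  (forall t, 0 <= t <= 1 -> G t setT) ->
  (forall t, 0 <= t <= 1 ->
     measurable_fun (prog_domain t : set (prog_space t)) (fun z => f z.1 z.2)) ->
  prog_measurable G f.
Proof. by move=> GT mf t t01; exact: mf t t01 (measurable_prog_domain (GT t t01)). Qed.

Lemma measurable_grid_step {d'} {rT : measurableType d'} (F : T -> R -> rT) n t :
  G t setT ->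
  (forall w s s', grid_index n s = grid_index n s' -> F w s = F w s') ->
  (forall k Y, k%:R / n.+1%:R <= t -> measurable Y ->
     G t [set w | Y (F w (k%:R / n.+1%:R))]) ->
  measurable_fun (prog_domain t : set (prog_space t)) (fun z => F z.1 z.2).
Proof.
move=> GtT Fstep Fadapted _ Y mY.
pose cell k : set R :=
  `[(0:R), t]%classic `&` `[k%:R / n.+1%:R, k.+1%:R / n.+1%:R[%classic.
have F_cell w s k : s \in `[k%:R / n.+1%:R, k.+1%:R / n.+1%:R[ ->
    F w s = F w (k%:R / n.+1%:R).
  by rewrite in_itv/= => ks; apply: Fstep; rewrite grid_index_grid (grid_indexE ks).
have -> : prog_domain t `&` (fun z => F z.1 z.2) @^-1` Y =
    \bigcup_k ([set w | Y (F w (k%:R / n.+1%:R))] `*` cell k).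
  apply/seteqP; split => [[w s] [/= ts Yws]|[w s] [k _ [/= Yk [ts ks]]]].
  - have s0 : 0 <= s by move: ts; rewrite /prog_domain /= in_itv/= => /andP[].
    have [k ks] := grid_cover n s0.
    have ks' : s \in `[k%:R / n.+1%:R, k.+1%:R / n.+1%:R[ by rewrite in_itv.
    by exists k => //; split; [rewrite /= -(F_cell _ _ _ ks')|split].
  - by split => //=; rewrite (F_cell _ _ _ ks).
apply: bigcupT_measurable => k.
have [kt|tk] := leP (k%:R / n.+1%:R) t; last first.
  suff -> : cell k = set0 by rewrite setX0.
  apply/seteqP; split => s //= []; rewrite /= !in_itv/= => /andP[_ st] /andP[ks _].
  by have := lt_le_trans tk (le_trans ks st); rewrite ltxx.
apply: sub_sigma_algebra; exists [set w | Y (F w (k%:R / n.+1%:R))], (cell k).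
split; first exact: Fadapted.
split; first by apply: measurableI; exact: measurable_itv.
by split => //; exact: subIsetl.
Qed.

End progressive.

Section adapted_averages.
Context {R : realType} {d} {T : measurableType d}.
Local Notation mu := (@lebesgue_measure R).
Variables (G : R -> set (set T)) (beta : R) (phi : T -> R -> R).
Hypothesis beta_gt1 : 1 < beta.
Hypothesis Lp01_phi : forall w, Lp01 beta (phi w).
Hypothesis phi_adapted : forall t, 0 <= t <= 1 -> forall B, weak_borel beta B ->
  G t ((fun w s => phi w s * \1_(`[(0:R), t]%classic) s) @^-1` B).

Lemma adapted_integral_itv a u Y : 0 <= u <= 1 -> measurable Y ->
  G u [set w | Y (fine (\int[mu]_(y in `[a, u]) ((phi w \_ I01) y)%:E)%E)].
Proof.
move=> u01 mY; have beta_gt0 : 0 < beta := lt_trans ltr01 beta_gt1.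
have conj_gt0 : 0 < conj_exp beta by rewrite divr_gt0 ?subr_gt0.
have Lcut w : Lp01 beta (fun s => phi w s * \1_`[(0:R), u] s).
  by apply: Lp01_mul_indic => //; exact: measurable_itv.
have Lcut2 w : Lp01 beta (fun s => (phi w s * \1_`[(0:R), u] s) * \1_`[a, u] s).
  by apply: Lp01_mul_indic => //; exact: measurable_itv.
have Lind : Lp01 (conj_exp beta) \1_`[a, u].
  by apply: Lp01_indic; last exact: measurable_itv.
have := phi_adapted u01 (weak_borel_pair01 Lind mY).
congr (G u _); apply/seteqP; split => w /=;
  by rewrite integral_itv_I01_indic// -(pair01_integral (ltW beta_gt1) (Lcut2 w)) => -[].
Qed.

Lemma adapted_cell_avg n k t Y :
  (forall s t, 0 <= s -> s <= t -> t <= 1 -> G s `<=` G t) ->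
  k%:R / n.+1%:R <= t <= 1 -> measurable Y ->
  G t [set w | Y (cell_avg (phi w) n (k%:R / n.+1%:R))].
Proof.
move=> Gmono /andP[kt t1] mY; have k0 : 0 <= k%:R / n.+1%:R :> R by [].
apply: (Gmono (k%:R / n.+1%:R) t) => //.
have scale_mY : measurable ((fun x : R => (n.+1%:R * x)%:E) @^-1` Y).
  have mscale : measurable_fun setT (fun x : R => (n.+1%:R * x)%:E).
    exact: measurableT_comp (mulrl_measurable _).
  by rewrite -[_ @^-1` _]setTI; exact: mscale.
have -> : [set w | Y (cell_avg (phi w) n (k%:R / n.+1%:R))] =
    [set w | ((fun x => (n.+1%:R * x)%:E) @^-1` Y)
      (fine (\int[mu]_(y in `[(k%:R - 1) / n.+1%:R, k%:R / n.+1%:R])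
               ((phi w \_ I01) y)%:E))].
  by apply/seteqP; split => w; rewrite /= (cell_avg_grid _ _ (ltW beta_gt1) (Lp01_phi w)).
by apply: adapted_integral_itv; first by rewrite k0 (le_trans kt).
Qed.

Lemma prog_measurable_limsup_cell_avg :
  filtration G -> prog_measurable G (fun w => limsup_cell_avg (phi w)).
Proof.
move=> [Gsigma Gmono]; have GT t : 0 <= t <= 1 -> G t setT.
  by move=> /Gsigma[[G0 GC _] _]; rewrite -(setD0 setT); exact: GC.
apply: prog_measurable_from_measurable_fun => // t t01.
apply: measurableT_comp => //; apply: measurable_fun_limn_esup => n.
apply: (measurable_grid_step (F := fun w s => cell_avg (phi w) n s)); first exact: GT.
  by move=> w s s'; exact: cell_avg_grid_index.
by move=> k Y kt mY; apply: adapted_cell_avg => //; rewrite kt; case/andP: t01.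
Qed.

End adapted_averages.

Unset Implicit Arguments.

Theorem lemma6p6 (R : realType) (d : measure_display) (T : measurableType d)
  (P : probability T R) (G : R -> set (set T)) (beta : R)
  (phi : T -> R -> R) :
  filtration G -> 1 < beta ->
  (forall w, Lp01 beta (phi w)) ->
  (forall B, weak_borel beta B -> measurable (phi @^-1` B)) ->
  (forall t, 0 <= t <= 1 -> forall B, weak_borel beta B ->
     G t ((fun w s => phi w s * \1_(`[(0:R), t]%classic) s) @^-1` B)) ->
  exists phibar : T -> R -> R,
    {ae P, forall w, {ae @lebesgue_measure R, forall s,
        `[(0:R), 1]%classic s -> phibar w s = phi w s}} /\
    prog_measurable G phibar.
Proof.
move=> filtG beta_gt1 Lp01_phi _ phi_adapted.
exists (fun w => limsup_cell_avg (phi w)); split.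
  by apply: aeW => w; exact: limsup_cell_avg_ae (ltW beta_gt1) (Lp01_phi w).
exact: prog_measurable_limsup_cell_avg beta_gt1 Lp01_phi phi_adapted filtG.
Qed.
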